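(* Let $1/q$ be a prime power, $\Bbbk=\mathbb{F}_{1/q}$, $n=4$, $\alpha=\beta=(1,1,1,1)$. Let $M$ and $M'$ be the $4\times4$ permutation matrices of $3412$ and $1432$ respectively (note $M_{4,4}=M'_{4,4}=0$). Let $G(M)$ be the random growth diagram obtained from a uniformly random $(F,F',N)\in\Omega_M$, and similarly $G(M')$. Conditioned on $G(M)_{3,3}=(2)$, $G(M)_{3,4}=G(M)_{4,3}=(2,1)$, we have $G(M)_{4,4}=(2,2)$ with probability $1$; conditioned on $G(M')_{3,3}=(2)$, $G(M')_{3,4}=G(M')_{4,3}=(2,1)$, we have $G(M')_{4,4}=(3,1)$ with probability $1$. In particular, the distribution of the entry $(i,j)$ of the growth diagram is not determined by the entries at $(i-1,j-1),(i-1,j),(i,j-1)$ together with $M_{i,j}$.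
   Context: Permutation matrix of $w\in S_4$: $\mathring{w}_{a,b}=\delta_{a,w(b)}$. $\mathrm{Fl}_{(1,1,1,1)}$: complete flags $0=F_0\subset F_1\subset\cdots\subset F_4=\Bbbk^4$; $(F,F')$ has relative position $M$ if $\dim(F_i\cap F'_j)=\sum_{i'\le i,j'\le j}M_{i',j'}$. $N\in\mathfrak{gl}_4$ is strictly compatible with $F$ if $N(F_i)\subseteq F_{i-1}$. $\Omega_M$: set of triples $(F,F',N)$ of complete flags of relative position $M$ and $N$ strictly compatible with both. The growth diagram of $(F,F',N)$ is the $5\times5$ array of partitions $G_{i,j}=\mathrm{JF}(N|_{F_i\cap F'_j})$, $0\le i,j\le4$, where for nilpotent $N$, $\mathrm{JF}(N)$ is the partition with $\lambda_1+\cdots+\lambda_i=\dim\ker N^i$. *)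

From HB Require Import structures.
From mathcomp Require Import all_boot all_order all_algebra all_fingroup all_field.
Set Implicit Arguments. Unset Strict Implicit. Unset Printing Implicit Defensive.
Import GRing.Theory.
Local Open Scope ring_scope.

(* Vectors of k^4 are row vectors 'rV[F]_4; a subspace is represented by a
   square matrix (its row space, mxalgebra).  N acts on row vectors by v |-> v *m N. *)

(* Permutation matrix of w in S_4 given in one-line notation
   w = [:: w(1); w(2); w(3); w(4)] (values 1..4).  Entry (a,b) (0-indexed)
   is delta_{a+1, w(b+1)}, i.e. M_{a,b} = delta_{a,w(b)} in 1-indexed terms. *)
Definition perm_mx_nat (w : seq nat) (a b : 'I_4) : nat :=
  (a.+1 == nth 0 w b).

Definition complete_flag (F : fieldType) (Fl : 'I_5 -> 'M[F]_4) : Prop :=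
  (forall i : 'I_5, \rank (Fl i) = i) /\
  (forall i j : 'I_5, (i <= j)%N -> (Fl i <= Fl j)%MS).

Definition rel_pos (F : fieldType) (M : 'I_4 -> 'I_4 -> nat)
  (Fl Fl' : 'I_5 -> 'M[F]_4) : Prop :=
  forall i j : 'I_5,
    \rank (Fl i :&: Fl' j)%MS =
    (\sum_(a < 4 | (a < i)%N) \sum_(b < 4 | (b < j)%N) M a b)%N.

Definition strictly_compatible (F : fieldType) (N : 'M[F]_4)
  (Fl : 'I_5 -> 'M[F]_4) : Prop :=
  forall i : 'I_5, (0 < i)%N -> (Fl i *m N <= Fl (inord i.-1))%MS.

Definition Omega (F : fieldType) (M : 'I_4 -> 'I_4 -> nat)
  (Fl Fl' : 'I_5 -> 'M[F]_4) (N : 'M[F]_4) : Prop :=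
  [/\ complete_flag Fl, complete_flag Fl', rel_pos M Fl Fl',
      strictly_compatible N Fl & strictly_compatible N Fl'].

(* JF(N|_V) for an N-stable subspace V of k^4 (dim <= 4): the partition
   lambda with lambda_1 + ... + lambda_i = dim ker (N|_V)^i, recorded as
   [:: lambda_1; lambda_2; lambda_3; lambda_4] (padded by zeros; all parts
   beyond the 4th vanish since dim V <= 4).  ker (N|_V)^i = V cap ker N^i. *)
Definition JF (F : fieldType) (V N : 'M[F]_4) : seq nat :=
  [seq (\rank (V :&: kermx (N ^+ k.+1))%MS - \rank (V :&: kermx (N ^+ k))%MS)%N
  | k <- iota 0 4].

Definition growth (F : fieldType) (Fl Fl' : 'I_5 -> 'M[F]_4) (N : 'M[F]_4)
  (i j : nat) : seq nat :=
  JF (Fl (inord i) :&: Fl' (inord j))%MS N.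

Definition cond_event (F : fieldType) (Fl Fl' : 'I_5 -> 'M[F]_4) (N : 'M[F]_4)
  : Prop :=
  [/\ growth Fl Fl' N 3 3 = [:: 2; 0; 0; 0]%N,
      growth Fl Fl' N 3 4 = [:: 2; 1; 0; 0]%N &
      growth Fl Fl' N 4 3 = [:: 2; 1; 0; 0]%N].

From HB Require Import structures.
From mathcomp Require Import all_boot all_order all_algebra all_fingroup all_field.
From mathcomp Require Import zify.
Set Implicit Arguments. Unset Strict Implicit. Unset Printing Implicit Defensive.
Import GRing.Theory.
Local Open Scope ring_scope.

(* On the conditioning event both hyperplanes H = F_3 and H' = F'_3 carry the
   Jordan type (2,1): N maps each of them onto a line and kills that line,
   while N kills the plane W = H :&: H'.  As dim W = 2, H + H' is the whole
   space, so the row space of N is H N + H' N, N^2 = 0 and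
   G_{4,4} = (4 - rk N, rk N).  For 3412 the lines H N <= F_2 and H' N <= F'_2
   are independent because F_2 :&: F'_2 = 0, so rk N = 2.  For 1432, W is the
   whole kernel of N on H, hence H N <= W :&: F_2 <= F_2 :&: F'_3, a line
   containing F_1 :&: F'_1; symmetrically for H' N, so rk N = 1.  Both events
   are realised by coordinate flags and a 0/1 matrix N. *)

Section JordanType.
Variable F : fieldType.
Implicit Types V W N : 'M[F]_4.

Lemma JF_rank V N :
  JF V N = [seq \rank (V *m N ^+ k) - \rank (V *m N ^+ k.+1) | k <- iota 0 4]%N.
Proof.
apply: eq_map => k.
have := mxrank_mul_ker V (N ^+ k); have := mxrank_mul_ker V (N ^+ k.+1).
have : (\rank (V *m N ^+ k.+1) <= \rank (V *m N ^+ k))%N.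
  by rewrite exprSr -mulmxE mulmxA mxrankM_maxl.
lia.
Qed.

Lemma JF_eqmx V W N : (V :=: W)%MS -> JF V N = JF W N.
Proof.
move=> eqVW; rewrite !JF_rank; apply: eq_map => k.
by rewrite (eqmxMr (N ^+ k) eqVW) (eqmxMr (N ^+ k.+1) eqVW).
Qed.

Lemma JF_sqr0 V N : V *m N ^+ 2 = 0 ->
  JF V N = [:: \rank V - \rank (V *m N); \rank (V *m N); 0; 0]%N.
Proof.
move=> VN2; have VN3 : V *m N ^+ 3 = 0 by rewrite exprSr -mulmxE mulmxA VN2 mul0mx.
have VN4 : V *m N ^+ 4 = 0 by rewrite exprSr -mulmxE mulmxA VN3 mul0mx.
by rewrite JF_rank /= expr0 mulmx1 expr1 VN2 VN3 VN4 mxrank0 subn0.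
Qed.

Lemma JF_eq2 V N : \rank V = 2%N -> JF V N = [:: 2; 0; 0; 0]%N -> V *m N = 0.
Proof.
rewrite JF_rank /= expr0 mulmx1 expr1 => rV [rVN _ _ _].
by apply/eqP; rewrite -mxrank_eq0; apply/eqP; lia.
Qed.

Lemma JF_eq21 V N : \rank V = 3%N -> JF V N = [:: 2; 1; 0; 0]%N ->
  \rank (V *m N) = 1%N /\ V *m N ^+ 2 = 0.
Proof.
rewrite JF_rank /= expr0 mulmx1 expr1 => rV [rVN rVN2 _ _].
have := mxrankM_maxl V N.
have : (\rank (V *m N ^+ 2) <= \rank (V *m N))%N.
  by rewrite expr2 -mulmxE mulmxA mxrankM_maxl.
move=> le21 le10; split; first lia.
by apply/eqP; rewrite -mxrank_eq0; apply/eqP; lia.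
Qed.

Lemma capmx_kermx_eq V W N : (W <= V)%MS -> W *m N = 0 ->
  (\rank W + \rank (V *m N))%N = \rank V -> (V :&: kermx N :=: W)%MS.
Proof.
move=> sWV WN0 rW; have sWK : (W <= V :&: kermx N)%MS.
  by rewrite sub_capmx sWV sub_kermx WN0 eqxx.
apply/eqmx_sym/eqmxP; rewrite -(mxrank_leqif_eq sWK).2.
by apply/eqP; have := mxrank_mul_ker V N; lia.
Qed.

Lemma image_sub_kernel_part V W N : (V *m N <= V)%MS -> V *m N ^+ 2 = 0 ->
  (W <= V)%MS -> W *m N = 0 -> (\rank W + \rank (V *m N))%N = \rank V ->
  (V *m N <= W)%MS.
Proof.
move=> VN_V VN2 sWV WN0 rW; rewrite -(capmx_kermx_eq sWV WN0 rW) sub_capmx VN_V.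
by rewrite sub_kermx -mulmxA -[N *m N]/(N ^+ 2) VN2 eqxx.
Qed.

End JordanType.

Section Flags.
Variable F : fieldType.
Implicit Types (Fl : 'I_5 -> 'M[F]_4) (N : 'M[F]_4).

Lemma flag_rank Fl k : complete_flag Fl -> (k < 5)%N -> \rank (Fl (inord k)) = k.
Proof. by case=> rFl _ lt_k5; rewrite rFl inordK. Qed.

Lemma flag_mono Fl i j : complete_flag Fl -> (i <= j < 5)%N ->
  (Fl (inord i) <= Fl (inord j))%MS.
Proof. by case=> _ subFl /andP[le_ij lt_j5]; apply: subFl; rewrite !inordK //; lia. Qed.

Lemma flag_full Fl : complete_flag Fl -> (Fl (inord 4) :=: 1%:M)%MS.
Proof. by move=> flagFl; apply/eqmxP; rewrite submx1 sub1mx /row_full flag_rank. Qed.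

Lemma compatible_step N Fl k : strictly_compatible N Fl -> (0 < k < 5)%N ->
  (Fl (inord k) *m N <= Fl (inord k.-1))%MS.
Proof.
by move=> compFl /andP[k_gt0 lt_k5]; have := compFl (inord k); rewrite inordK // => ->.
Qed.

Lemma flag_stable N Fl k : complete_flag Fl -> strictly_compatible N Fl ->
  (0 < k < 5)%N -> (Fl (inord k) *m N <= Fl (inord k))%MS.
Proof.
move=> flagFl compFl lt0k5; apply: submx_trans (compatible_step compFl lt0k5) _.
by apply: flag_mono => //; rewrite leq_pred; case/andP: lt0k5.
Qed.

Lemma growth_last_col Fl (Fl' : 'I_5 -> 'M[F]_4) N i : complete_flag Fl' ->
  growth Fl Fl' N i 4 = JF (Fl (inord i)) N.
Proof.
move=> flagFl'; apply: JF_eqmx; apply/capmx_idPl; apply: submx_full.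
by rewrite /row_full flag_rank.
Qed.

Lemma growth_last_row Fl (Fl' : 'I_5 -> 'M[F]_4) N j : complete_flag Fl ->
  growth Fl Fl' N 4 j = JF (Fl' (inord j)) N.
Proof.
move=> flagFl; apply: JF_eqmx; apply/capmx_idPr; apply: submx_full.
by rewrite /row_full flag_rank.
Qed.

End Flags.


Section Conditioned.
Variables (F : fieldType) (Fl Fl' : 'I_5 -> 'M[F]_4) (N : 'M[F]_4).
Hypotheses (flagF : complete_flag Fl) (flagF' : complete_flag Fl').
Hypotheses (compF : strictly_compatible N Fl) (compF' : strictly_compatible N Fl').
Hypothesis cond : cond_event Fl Fl' N.

Local Notation H3 := (Fl (inord 3)).
Local Notation H3' := (Fl' (inord 3)).
Local Notation W := (H3 :&: H3')%MS.

Hypothesis rankW : \rank W = 2%N.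

Lemma hyper_image : [/\ \rank (H3 *m N) = 1%N, H3 *m N ^+ 2 = 0,
  \rank (H3' *m N) = 1%N & H3' *m N ^+ 2 = 0].
Proof.
case: cond => _ g34 g43.
rewrite growth_last_col // in g34; rewrite growth_last_row // in g43.
have [rHN HN2] := JF_eq21 (flag_rank (k := 3) flagF isT) g34.
have [rH'N H'N2] := JF_eq21 (flag_rank (k := 3) flagF' isT) g43.
by split.
Qed.

Lemma capmx_hypers_mulN : W *m N = 0.
Proof. by case: cond => g33 _ _; exact: JF_eq2 rankW g33. Qed.

Lemma hypers_mulmx_span (C : 'M[F]_4) : (C :=: H3 *m C + H3' *m C)%MS.
Proof.
apply/eqmxP; rewrite addsmx_sub !submxMl andbT.
rewrite -{1}[C]mul1mx -addsmxMr submxMr // sub1mx.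
have := mxrank_sum_cap H3 H3'.
by rewrite rankW !(flag_rank (k := 3)) // /row_full; lia.
Qed.

Lemma sqrN_eq0 : N ^+ 2 = 0.
Proof.
have [_ HN2 _ H'N2] := hyper_image.
by apply/eqP; rewrite -submx0 (hypers_mulmx_span (N ^+ 2)) HN2 H'N2 addsmx0.
Qed.

Lemma growth_corner : growth Fl Fl' N 4 4 = [:: 4 - \rank N; \rank N; 0; 0]%N.
Proof.
rewrite growth_last_row // (JF_eqmx _ (flag_full flagF')) JF_sqr0 ?mul1mx ?mxrank1 //.
by rewrite sqrN_eq0.
Qed.

Lemma rank_mulN_disjoint :
  \rank (Fl (inord 2) :&: Fl' (inord 2))%MS = 0%N -> \rank N = 2%N.
Proof.
move=> rcap0; have [rHN _ rH'N _] := hyper_image.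
have /mxrankS : (H3 *m N :&: H3' *m N <= Fl (inord 2) :&: Fl' (inord 2))%MS.
  by apply: capmxS; apply: compatible_step.
rewrite rcap0 leqn0 => /eqP rcap.
have := mxrank_sum_cap (H3 *m N) (H3' *m N).
rewrite -(hypers_mulmx_span N) rHN rH'N rcap; lia.
Qed.

Lemma hyper_image_sub_capmx : (H3 *m N <= W)%MS /\ (H3' *m N <= W)%MS.
Proof.
have [rHN HN2 rH'N H'N2] := hyper_image.
split; apply: image_sub_kernel_part;
  by rewrite ?capmxSl ?capmxSr ?capmx_hypers_mulN ?flag_stable ?rankW ?rHN ?rH'N ?flag_rank.
Qed.

Lemma rank_mulN_line :
  \rank (Fl (inord 1) :&: Fl' (inord 1))%MS = 1%N ->
  \rank (Fl (inord 2) :&: H3')%MS = 1%N -> \rank (H3 :&: Fl' (inord 2))%MS = 1%N ->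
  \rank N = 1%N.
Proof.
set L := (Fl (inord 1) :&: Fl' (inord 1))%MS => rL r23 r32.
have [HN_W H'N_W] := hyper_image_sub_capmx.
have on_line (A B : 'M[F]_4) : (L <= A :&: B)%MS -> \rank (A :&: B)%MS = 1%N ->
    (A :&: B <= L)%MS.
  by move=> sL rAB; rewrite -(mxrank_leqif_sup sL).2 rAB rL.
have HN_L : (H3 *m N <= L)%MS.
  apply: submx_trans (on_line _ _ _ r23); last by apply: capmxS; apply: flag_mono.
  by rewrite sub_capmx (compatible_step compF) // (submx_trans HN_W) ?capmxSr.
have H'N_L : (H3' *m N <= L)%MS.
  apply: submx_trans (on_line _ _ _ r32); last by apply: capmxS; apply: flag_mono.
  by rewrite sub_capmx (compatible_step compF') // (submx_trans H'N_W) ?capmxSl.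
have /mxrankS : (N <= L)%MS by rewrite (hypers_mulmx_span N) addsmx_sub HN_L.
have [rHN _ _ _] := hyper_image; have := mxrankM_maxr H3 N.
rewrite rL rHN; lia.
Qed.

End Conditioned.

Ltac expand_sums := repeat progress rewrite ?big_mkcond ?big_ord_recr ?big_ord0 /=.

Section CornerEntry.
Variables (F : fieldType) (Fl Fl' : 'I_5 -> 'M[F]_4) (N : 'M[F]_4).

Lemma rel_pos_rank M i j :
  rel_pos M Fl Fl' -> (i < 5)%N -> (j < 5)%N ->
  \rank (Fl (inord i) :&: Fl' (inord j))%MS =
  (\sum_(a < 4 | (a < i)%N) \sum_(b < 4 | (b < j)%N) M a b)%N.
Proof. by move=> relFl lt_i5 lt_j5; rewrite relFl !inordK. Qed.

Lemma rel_pos_3412 : rel_pos (perm_mx_nat [:: 3; 4; 1; 2]%N) Fl Fl' ->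
  \rank (Fl (inord 3) :&: Fl' (inord 3))%MS = 2%N /\
  \rank (Fl (inord 2) :&: Fl' (inord 2))%MS = 0%N.
Proof. by move=> relFl; rewrite !(rel_pos_rank relFl) // /perm_mx_nat; expand_sums. Qed.

Lemma rel_pos_1432 : rel_pos (perm_mx_nat [:: 1; 4; 3; 2]%N) Fl Fl' ->
  [/\ \rank (Fl (inord 3) :&: Fl' (inord 3))%MS = 2%N,
      \rank (Fl (inord 1) :&: Fl' (inord 1))%MS = 1%N,
      \rank (Fl (inord 2) :&: Fl' (inord 3))%MS = 1%N &
      \rank (Fl (inord 3) :&: Fl' (inord 2))%MS = 1%N].
Proof. by move=> relFl; rewrite !(rel_pos_rank relFl) // /perm_mx_nat; expand_sums. Qed.

Lemma growth_corner_3412 : Omega (perm_mx_nat [:: 3; 4; 1; 2]%N) Fl Fl' N ->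
  cond_event Fl Fl' N -> growth Fl Fl' N 4 4 = [:: 2; 2; 0; 0]%N.
Proof.
case=> flagF flagF' /rel_pos_3412[rW r22] compF compF' cond.
by rewrite growth_corner // (@rank_mulN_disjoint _ Fl Fl').
Qed.

Lemma growth_corner_1432 : Omega (perm_mx_nat [:: 1; 4; 3; 2]%N) Fl Fl' N ->
  cond_event Fl Fl' N -> growth Fl Fl' N 4 4 = [:: 3; 1; 0; 0]%N.
Proof.
case=> flagF flagF' /rel_pos_1432[rW r11 r23 r32] compF compF' cond.
by rewrite growth_corner // (@rank_mulN_line _ Fl Fl').
Qed.

End CornerEntry.

Section CoordinateSubspaces.
Context {F : fieldType} {n : nat}.
Implicit Types (P Q : pred 'I_n) (f : rel 'I_n).

Definition coord_mx P : 'M[F]_n := diag_mx (\row_i (P i)%:R).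

(* Acting on row vectors, [rel_mx f] maps e_i to the sum of the e_j with [f i j]. *)
Definition rel_mx f : 'M[F]_n := \matrix_(i, j) (f i j)%:R.

Lemma eq_coord_mx P Q : P =1 Q -> coord_mx P = coord_mx Q.
Proof. by move=> eqPQ; apply/matrixP => i j; rewrite !mxE eqPQ. Qed.

Lemma coord_mx_mul P Q : coord_mx P *m coord_mx Q = coord_mx (predI P Q).
Proof.
by apply/matrixP => i j; rewrite mul_diag_mx !mxE mulrnAr -natrM mulnb.
Qed.

Lemma sub_coord_mx m (A : 'M[F]_(m, n)) P : (A <= coord_mx P)%MS = (A *m coord_mx P == A).
Proof.
apply/idP/eqP => [/submxP[D ->] | <-]; last exact: submxMl.
by rewrite -mulmxA coord_mx_mul; congr (_ *m _); apply: eq_coord_mx => i /=; rewrite andbb.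
Qed.

Lemma coord_mx_sub P Q : subpred P Q -> (coord_mx P <= coord_mx Q)%MS.
Proof.
move=> sPQ; rewrite sub_coord_mx coord_mx_mul; apply/eqP/eq_coord_mx => i /=.
by case/boolP: (P i) => // /sPQ ->.
Qed.

Lemma coord_mx_cap P Q : (coord_mx P :&: coord_mx Q :=: coord_mx (predI P Q))%MS.
Proof.
apply/eqmxP/andP; split; last by rewrite sub_capmx !coord_mx_sub // => i /andP[].
rewrite sub_coord_mx -coord_mx_mul mulmxA.
have /eqP -> : (coord_mx P :&: coord_mx Q)%MS *m coord_mx P == (coord_mx P :&: coord_mx Q)%MS.
  by rewrite -sub_coord_mx capmxSl.
by rewrite -sub_coord_mx capmxSr.
Qed.

Lemma rank_coord_mx P : \rank (coord_mx P) = (\sum_i P i)%N.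
Proof.
have -> : (coord_mx P :=: \sum_(i | P i) <<delta_mx 0 i : 'rV[F]_n>>)%MS.
  apply/eqmxP/andP; split.
    apply/row_subP => i; rewrite row_diag_mx mxE.
    case/boolP: (P i) => Pi; last by rewrite scale0r sub0mx.
    by rewrite scale1r (sumsmx_sup i) // genmxE.
  apply/sumsmx_subP => i Pi; rewrite genmxE; apply: (eq_row_sub i).
  by rewrite row_diag_mx mxE Pi scale1r.
have /mxdirectP -> /= := @mxdirect_delta F _ P n id (fun i j _ _ => id).
by rewrite big_mkcond; apply: eq_bigr => i _; case: (P i); rewrite /= ?mxrank_gen ?mxrank_delta.
Qed.

Lemma eq_rel_mx f g : f =2 g -> rel_mx f = rel_mx g.
Proof. by move=> eq_fg; apply/matrixP => i j; rewrite !mxE eq_fg. Qed.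

Lemma coord_mxMrel P f : coord_mx P *m rel_mx f = rel_mx (fun i j => P i && f i j).
Proof. by apply/matrixP => i j; rewrite mul_diag_mx !mxE -natrM mulnb. Qed.

Lemma rel_mxMcoord f Q : rel_mx f *m coord_mx Q = rel_mx (fun i j => f i j && Q j).
Proof. by apply/matrixP => i j; rewrite mul_mx_diag !mxE -natrM mulnb. Qed.

Lemma coord_rel_sub P Q f : (forall i j, P i -> f i j -> Q j) ->
  (coord_mx P *m rel_mx f <= coord_mx Q)%MS.
Proof.
move=> PfQ; rewrite sub_coord_mx coord_mxMrel rel_mxMcoord.
apply/eqP/eq_rel_mx => i j; case/boolP: (P i) => //= Pi.
by case/boolP: (f i j) => //= /(PfQ _ _ Pi) ->.
Qed.

Lemma rel_mx_sqr0 f : (forall i j k, f i j -> f j k = false) -> rel_mx f ^+ 2 = 0.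
Proof.
move=> no_path; rewrite expr2 -mulmxE; apply/matrixP => i k; rewrite !mxE.
apply: big1 => j _; rewrite !mxE -natrM mulnb.
by case/boolP: (f i j) => //= /no_path ->.
Qed.

Lemma rel_mx_eq0 f : f =2 (fun _ _ => false) -> rel_mx f = 0.
Proof. by move=> f0; apply/matrixP => i j; rewrite !mxE f0. Qed.

Lemma rel_mx_delta f a b : f =2 (fun i j => (i == a) && (j == b)) ->
  rel_mx f = delta_mx a b.
Proof. by move=> f_ab; apply/matrixP => i j; rewrite !mxE f_ab. Qed.

End CoordinateSubspaces.

Arguments rel_mx F {n} f.

Section CoordinateFlags.
Variable F : fieldType.

(* The flag spanned by e_{s_0}, e_{s_1}, ... *)
Definition coord_flag (s : seq nat) (i : 'I_5) : 'M[F]_4 :=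
  coord_mx [pred k : 'I_4 | index (k : nat) s < i]%N.

Lemma coord_flag_complete s :
  (forall i : 'I_5, \sum_(k < 4) (index (k : nat) s < i) = i)%N ->
  complete_flag (coord_flag s).
Proof.
move=> card_s; split=> [i | i j le_ij]; first by rewrite rank_coord_mx card_s.
by apply: coord_mx_sub => k /= /leq_trans; apply.
Qed.

Lemma coord_flag_rel_pos s t M :
  (forall i j : 'I_5, \sum_(k < 4) ((index (k : nat) s < i) && (index (k : nat) t < j)) =
     \sum_(a < 4 | a < i) \sum_(b < 4 | b < j) M a b)%N ->
  rel_pos M (coord_flag s) (coord_flag t).
Proof. by move=> card_st i j; rewrite coord_mx_cap rank_coord_mx card_st. Qed.

Lemma coord_flag_compatible s (f : rel 'I_4) :
  (forall a b, f a b -> index (b : nat) s < index (a : nat) s)%N ->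
  strictly_compatible (rel_mx F f) (coord_flag s).
Proof.
move=> f_lowers i i_gt0; rewrite /coord_flag inordK; last by have := ltn_ord i; lia.
by apply: coord_rel_sub => a b /= lt_ai /f_lowers; lia.
Qed.

Lemma coord_flag_growth s t f a b : (a < 5)%N -> (b < 5)%N ->
  growth (coord_flag s) (coord_flag t) (rel_mx F f) a b =
  JF (coord_mx [pred k : 'I_4 | (index (k : nat) s < a) && (index (k : nat) t < b)]%N)
     (rel_mx F f).
Proof.
move=> lt_a5 lt_b5; rewrite /growth /coord_flag !inordK // (JF_eqmx _ (coord_mx_cap _ _)).
by congr JF; apply: eq_coord_mx.
Qed.

Lemma JF_coord_rel P (f : rel 'I_4) : rel_mx F f ^+ 2 = 0 ->
  JF (coord_mx P) (rel_mx F f) =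
  [:: \sum_(k < 4) P k - \rank (rel_mx F (fun i j => P i && f i j));
      \rank (rel_mx F (fun i j => P i && f i j)); 0; 0]%N.
Proof. by move=> N2; rewrite JF_sqr0 ?rank_coord_mx ?coord_mxMrel // N2 mulmx0. Qed.

End CoordinateFlags.

Definition edge_rel (E : seq (nat * nat)) : rel 'I_4 :=
  fun i j => ((i : nat), (j : nat)) \in E.

Section Witnesses.
Variable F : fieldType.

Lemma exists_3412 : exists (Fl Fl' : 'I_5 -> 'M[F]_4) (N : 'M[F]_4),
  Omega (perm_mx_nat [:: 3; 4; 1; 2]%N) Fl Fl' N /\ cond_event Fl Fl' N.
Proof.
pose f := edge_rel [:: (1, 0); (3, 2)]%N.
have N2 : rel_mx F f ^+ 2 = 0.
  by apply: rel_mx_sqr0 => -[[|[|[|[|//]]]] ?] [[|[|[|[|//]]]] ?] [[|[|[|[|//]]]] ?].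
exists (coord_flag F [:: 0; 1; 2; 3]%N), (coord_flag F [:: 2; 3; 0; 1]%N), (rel_mx F f).
split; first split.
- by apply: coord_flag_complete => -[[|[|[|[|[|//]]]]] ?]; expand_sums.
- by apply: coord_flag_complete => -[[|[|[|[|[|//]]]]] ?]; expand_sums.
- by apply: coord_flag_rel_pos => -[[|[|[|[|[|//]]]]] ?] -[[|[|[|[|[|//]]]]] ?];
    rewrite /perm_mx_nat; expand_sums.
- by apply: coord_flag_compatible => -[[|[|[|[|//]]]] ?] -[[|[|[|[|//]]]] ?].
- by apply: coord_flag_compatible => -[[|[|[|[|//]]]] ?] -[[|[|[|[|//]]]] ?].
split; rewrite coord_flag_growth // JF_coord_rel //=.
- rewrite rel_mx_eq0 ?mxrank0; first by expand_sums.
  by move=> -[[|[|[|[|//]]]] ?] -[[|[|[|[|//]]]] ?].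
- rewrite (@rel_mx_delta _ _ _ (Ordinal (isT : 1 < 4)%N) (Ordinal (isT : 0 < 4)%N)).
    by rewrite mxrank_delta; expand_sums.
  by move=> -[[|[|[|[|//]]]] ?] -[[|[|[|[|//]]]] ?].
- rewrite (@rel_mx_delta _ _ _ (Ordinal (isT : 3 < 4)%N) (Ordinal (isT : 2 < 4)%N)).
    by rewrite mxrank_delta; expand_sums.
  by move=> -[[|[|[|[|//]]]] ?] -[[|[|[|[|//]]]] ?].
Qed.

Lemma exists_1432 : exists (Fl Fl' : 'I_5 -> 'M[F]_4) (N : 'M[F]_4),
  Omega (perm_mx_nat [:: 1; 4; 3; 2]%N) Fl Fl' N /\ cond_event Fl Fl' N.
Proof.
pose f := edge_rel [:: (1, 0); (3, 0)]%N.
have N2 : rel_mx F f ^+ 2 = 0.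
  by apply: rel_mx_sqr0 => -[[|[|[|[|//]]]] ?] [[|[|[|[|//]]]] ?] [[|[|[|[|//]]]] ?].
exists (coord_flag F [:: 0; 1; 2; 3]%N), (coord_flag F [:: 0; 3; 2; 1]%N), (rel_mx F f).
split; first split.
- by apply: coord_flag_complete => -[[|[|[|[|[|//]]]]] ?]; expand_sums.
- by apply: coord_flag_complete => -[[|[|[|[|[|//]]]]] ?]; expand_sums.
- by apply: coord_flag_rel_pos => -[[|[|[|[|[|//]]]]] ?] -[[|[|[|[|[|//]]]]] ?];
    rewrite /perm_mx_nat; expand_sums.
- by apply: coord_flag_compatible => -[[|[|[|[|//]]]] ?] -[[|[|[|[|//]]]] ?].
- by apply: coord_flag_compatible => -[[|[|[|[|//]]]] ?] -[[|[|[|[|//]]]] ?].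
split; rewrite coord_flag_growth // JF_coord_rel //=.
- rewrite rel_mx_eq0 ?mxrank0; first by expand_sums.
  by move=> -[[|[|[|[|//]]]] ?] -[[|[|[|[|//]]]] ?].
- rewrite (@rel_mx_delta _ _ _ (Ordinal (isT : 1 < 4)%N) (Ordinal (isT : 0 < 4)%N)).
    by rewrite mxrank_delta; expand_sums.
  by move=> -[[|[|[|[|//]]]] ?] -[[|[|[|[|//]]]] ?].
- rewrite (@rel_mx_delta _ _ _ (Ordinal (isT : 3 < 4)%N) (Ordinal (isT : 0 < 4)%N)).
    by rewrite mxrank_delta; expand_sums.
  by move=> -[[|[|[|[|//]]]] ?] -[[|[|[|[|//]]]] ?].
Qed.

End Witnesses.

Local Close Scope ring_scope.

Theorem proposition7p23 (F : finFieldType) :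
  ((exists (Fl Fl' : 'I_5 -> 'M[F]_4) (N : 'M[F]_4),
       Omega (perm_mx_nat [:: 3; 4; 1; 2]%N) Fl Fl' N /\ cond_event Fl Fl' N) /\
   (forall (Fl Fl' : 'I_5 -> 'M[F]_4) (N : 'M[F]_4),
       Omega (perm_mx_nat [:: 3; 4; 1; 2]%N) Fl Fl' N -> cond_event Fl Fl' N ->
       growth Fl Fl' N 4 4 = [:: 2; 2; 0; 0]%N)) /\
  ((exists (Fl Fl' : 'I_5 -> 'M[F]_4) (N : 'M[F]_4),
       Omega (perm_mx_nat [:: 1; 4; 3; 2]%N) Fl Fl' N /\ cond_event Fl Fl' N) /\
   (forall (Fl Fl' : 'I_5 -> 'M[F]_4) (N : 'M[F]_4),
       Omega (perm_mx_nat [:: 1; 4; 3; 2]%N) Fl Fl' N -> cond_event Fl Fl' N ->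
       growth Fl Fl' N 4 4 = [:: 3; 1; 0; 0]%N)).
Proof.
split; split.
- exact: exists_3412.
- exact: growth_corner_3412.
- exact: exists_1432.
- exact: growth_corner_1432.
Qed.
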